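(* In the setting below, suppose $\eta \geq \eta_0$ and $t < \tau$. Then there is an integer $s$ with $t \le s \leq t + 1 + 4n/\gamma + 96/\gamma^2$ such that either $s = \tau$ or an oscillation happens at iteration $s$.
   Context: Dimension $d=2$. Data $x_1,\dots,x_n\in\mathbb{R}^2$ with $\|x_i\|\le 1$, linearly separable (some $w$ has $\langle w,x_i\rangle>0$ for all $i$). $F(w) = \frac{1}{n}\sum_{i=1}^n \log(1+\exp(-\langle w, x_i\rangle))$. Maximum margin $\gamma = \max_{\|w\|=1}\min_i \langle w, x_i\rangle$ with maximizer the unit vector $w_*$; $v_*$ is a fixed unit vector orthogonal to $w_*$. Gradient descent: $w_0=0$, $w_{t+1} = w_t - \eta\nabla F(w_t)$ with constant $\eta>0$. $\hat{w}_t = \langle w_t, w_*\rangle$, $\tilde{w}_t = \langle w_t, v_*\rangle$. $\tau = \min\{t\ge 0: F(w_t)\le 1/(8\eta)\}$. $\eta_0 = \max(n, \frac{32}{\gamma^2}\log\frac{256}{\gamma^2})$. $\lambda = \frac{1}{\gamma}\log\frac{1}{\exp(1/(8\eta))-1}$. An oscillation happens at iteration $t\ge 0$ if all of: (1) $\hat{w}_t \geq \lambda$; (2) $F(w_t) > 1/(8\eta)$ and $F(w_{t+1}) > 1/(8\eta)$; (3) $\tilde{w}_{t+1}\tilde{w}_t < 0$. *)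

From Stdlib Require Import Reals.
Open Scope R_scope.

Definition vec2 := (R * R)%type.

Definition dot (u v : vec2) : R := fst u * fst v + snd u * snd v.
Definition vnorm (u : vec2) : R := sqrt (dot u u).
Definition vadd (u v : vec2) : vec2 := (fst u + fst v, snd u + snd v).
Definition vscale (a : R) (u : vec2) : vec2 := (a * fst u, a * snd u).

Fixpoint rsum (f : nat -> R) (n : nat) : R :=
  match n with
  | O => 0
  | S k => rsum f k + f k
  end.

Fixpoint vsum (f : nat -> vec2) (n : nat) : vec2 :=
  match n with
  | O => (0, 0)
  | S k => vadd (vsum f k) (f k)
  end.

Definition F (n : nat) (x : nat -> vec2) (w : vec2) : R :=
  / INR n * rsum (fun i => ln (1 + exp (- dot w (x i)))) n.

Definition gradF (n : nat) (x : nat -> vec2) (w : vec2) : vec2 :=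
  vscale (- / INR n)
    (vsum (fun i => vscale (exp (- dot w (x i)) / (1 + exp (- dot w (x i)))) (x i)) n).

Fixpoint gd (n : nat) (x : nat -> vec2) (eta : R) (t : nat) : vec2 :=
  match t with
  | O => (0, 0)
  | S k => let w := gd n x eta k in vadd w (vscale (- eta) (gradF n x w))
  end.

Definition max_margin (n : nat) (x : nat -> vec2) (gamma : R) (wstar : vec2) : Prop :=
  vnorm wstar = 1 /\
  (forall i, (i < n)%nat -> gamma <= dot wstar (x i)) /\
  (exists i, (i < n)%nat /\ dot wstar (x i) = gamma) /\
  (forall w, vnorm w = 1 -> exists i, (i < n)%nat /\ dot w (x i) <= gamma).

Definition is_tau (n : nat) (x : nat -> vec2) (eta : R) (s : nat) : Prop :=
  F n x (gd n x eta s) <= 1 / (8 * eta) /\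
  (forall k, (k < s)%nat -> F n x (gd n x eta k) > 1 / (8 * eta)).

(* t < tau (tau possibly infinite, i.e. the set may be empty) *)
Definition lt_tau (n : nat) (x : nat -> vec2) (eta : R) (t : nat) : Prop :=
  forall k, (k <= t)%nat -> F n x (gd n x eta k) > 1 / (8 * eta).

Definition lambda (eta gamma : R) : R :=
  / gamma * ln (1 / (exp (1 / (8 * eta)) - 1)).

Definition eta0 (n : nat) (gamma : R) : R :=
  Rmax (INR n) (32 / gamma ^ 2 * ln (256 / gamma ^ 2)).

Definition oscillation (n : nat) (x : nat -> vec2) (eta gamma : R)
    (wstar vstar : vec2) (t : nat) : Prop :=
  dot (gd n x eta t) wstar >= lambda eta gamma /\
  F n x (gd n x eta t) > 1 / (8 * eta) /\
  F n x (gd n x eta (S t)) > 1 / (8 * eta) /\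
  dot (gd n x eta (S t)) vstar * dot (gd n x eta t) vstar < 0.

From Stdlib Require Import Reals Lra Lia Psatz Classical ZArith.
From Coquelicot Require Import Rcomplements.
Open Scope R_scope.

(* Write [w_s = hat_s ws + tl_s v]. The component [hat_s] never decreases and exceeds [lambda]
   from the first step on, so [tl_s = 0] would put every margin above [gamma * lambda] and the
   risk below [1/(8 eta)]. Hence, while the risk stays above that threshold, [tl] does not
   vanish, and it suffices to rule out an excursion of [tl] of one sign (positive, after
   flipping [v]) that starts with [|tl| <= eta] and lasts [4 n/gamma + 66/gamma^2 + 3] steps.
   During it [hat] grows by [gamma/16] per step, so after [48/gamma^2] steps [gamma * hat]
   exceeds [gamma * lambda] by [3] while [tl <= 21 eta/20]; from then on the examples with
   [<x_i, v> < 0] dominate the gradient along [v] and [tl] decreases. If at some step no margin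
   is negative, none becomes negative later, and the loss mass [y] of the examples with
   [<x_i, v> <= 0] obeys [y' <= y exp (- y)]: it decays like [1/k] and drives the risk below
   the threshold within [18/gamma^2] steps. Otherwise every step has a misclassified example,
   which raises [hat] by at least [eta gamma/(2 n)] while lowering [tl^2] in proportion to
   [hat]; after [4 n/gamma] steps the increase [2 eta] of [hat] costs more than
   [tl^2 <= (21 eta/20)^2] can pay. *)

Lemma exp_le_exp x y : x <= y -> exp x <= exp y.
Proof. intros [Hlt | ->]; [left; now apply exp_increasing | lra]. Qed.

Lemma exp_opp_mul x : exp (- x) * exp x = 1.
Proof. rewrite <- exp_plus, Rplus_opp_l. apply exp_0. Qed.

Lemma ln_le_id a : 0 < a -> ln a <= a.
Proof.
  intros Ha. rewrite <- (exp_ln a) at 2 by exact Ha.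
  pose proof (exp_ineq1_le (ln a)). lra.
Qed.

Lemma ln_1_plus_le u : 0 <= u -> ln (1 + u) <= u.
Proof.
  intros Hu. rewrite <- (ln_exp u) at 2.
  apply ln_le; [lra |]. pose proof (exp_ineq1_le u). lra.
Qed.

Lemma mul_exp_opp_le y : y * exp (- y) <= exp (-1).
Proof.
  pose proof (exp_ineq1_le (y - 1)). pose proof (exp_pos (- y)).
  replace (exp (-1)) with (exp (y - 1) * exp (- y)) by (rewrite <- exp_plus; f_equal; ring).
  nra.
Qed.

Lemma exp_1_ge : 5 / 2 <= exp 1.
Proof.
  assert (Hsq : forall y, exp (2 * y) = exp y ^ 2).
  { intros y. replace (2 * y) with (y + y) by ring. rewrite exp_plus. ring. }
  replace 1 with (2 * (2 * (2 * (1 / 8)))) by field. rewrite !Hsq.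
  assert (H8 : 9 / 8 <= exp (1 / 8)) by (pose proof (exp_ineq1_le (1 / 8)); lra).
  rewrite <- !pow_mult.
  apply Rle_trans with ((9 / 8) ^ 8); [lra | apply pow_incr; lra].
Qed.

Lemma exp_neg1_le : exp (-1) <= 2 / 5.
Proof.
  assert (Hinv : exp (-1) * exp 1 = 1)
    by (rewrite <- exp_plus; replace (-1 + 1) with 0 by ring; apply exp_0).
  pose proof exp_1_ge. pose proof (exp_pos (-1)). nra.
Qed.

Lemma exp_neg3_le : exp (-3) <= (2 / 5) ^ 3.
Proof.
  replace (-3) with (-1 + -1 + -1) by ring. rewrite !exp_plus.
  pose proof exp_neg1_le. pose proof (exp_pos (-1)).
  assert (exp (-1) * exp (-1) <= 2 / 5 * (2 / 5)) by (apply Rmult_le_compat; lra).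
  simpl. nra.
Qed.

Lemma exp_5_le : exp 5 <= 256.
Proof.
  replace 5 with (1 + 1 + 1 + 1 + 1) by ring. rewrite !exp_plus.
  pose proof exp_le_3. pose proof (exp_pos 1).
  assert (exp 1 * exp 1 <= 9) by nra.
  assert (exp 1 * exp 1 * exp 1 <= 27) by nra.
  assert (exp 1 * exp 1 * exp 1 * exp 1 <= 81) by nra.
  nra.
Qed.

Lemma expm1_bounds th : 0 <= th <= 1 / 8 -> th <= exp th - 1 <= 8 / 7 * th.
Proof.
  intros Hth. pose proof (exp_ineq1_le th). pose proof (exp_ineq1_le (- th)).
  pose proof (exp_opp_mul th). pose proof (exp_pos th).
  assert (exp th * (1 - th) <= 1) by nra.
  split; nra.
Qed.

Definition loss (y : R) : R := ln (1 + exp (- y)).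
Definition sigm (y : R) : R := exp (- y) / (1 + exp (- y)).

Lemma sigm_0 : sigm 0 = 1 / 2.
Proof. unfold sigm. rewrite Ropp_0, exp_0. field. Qed.

Lemma sigm_pos y : 0 < sigm y.
Proof. unfold sigm. pose proof (exp_pos (- y)). apply Rdiv_lt_0_compat; lra. Qed.

Lemma sigm_le_1 y : sigm y <= 1.
Proof. unfold sigm. pose proof (exp_pos (- y)). rewrite Rle_div_l; lra. Qed.

Lemma sigm_le_exp y : sigm y <= exp (- y).
Proof. unfold sigm. pose proof (exp_pos (- y)). rewrite Rle_div_l; nra. Qed.

Lemma sigm_ge_half y : y <= 0 -> 1 / 2 <= sigm y.
Proof.
  intros Hy. unfold sigm. pose proof (exp_le_exp 0 (- y) ltac:(lra)) as Hexp.
  rewrite exp_0 in Hexp. rewrite <- Rle_div_r; lra.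
Qed.

Lemma sigm_ge_exp_half y : 0 <= y -> exp (- y) / 2 <= sigm y.
Proof.
  intros Hy. unfold sigm. pose proof (exp_le_exp (- y) 0 ltac:(lra)) as Hexp. pose proof (exp_pos (- y)).
  rewrite exp_0 in Hexp. rewrite <- Rle_div_r; [| lra]. unfold Rdiv. nra.
Qed.

Lemma loss_ge_0 y : 0 <= loss y.
Proof. unfold loss. rewrite <- ln_1. apply ln_le; [lra |]. pose proof (exp_pos (- y)). lra. Qed.

Lemma loss_le_exp y : loss y <= exp (- y).
Proof. apply ln_1_plus_le. pose proof (exp_pos (- y)). lra. Qed.

Lemma loss_half_le_sigm y : 0 <= y -> loss y / 2 <= sigm y.
Proof. intros Hy. pose proof (loss_le_exp y). pose proof (sigm_ge_exp_half y Hy). lra. Qed.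

Lemma loss_antimono y1 y2 : y1 <= y2 -> loss y2 <= loss y1.
Proof.
  intros Hy. unfold loss. pose proof (exp_pos (- y2)).
  apply ln_le; [lra |]. pose proof (exp_le_exp (- y2) (- y1)). lra.
Qed.

Lemma rsum_ext f g m : (forall i, (i < m)%nat -> f i = g i) -> rsum f m = rsum g m.
Proof.
  intros H. induction m as [| m IH]; simpl; [reflexivity |].
  rewrite IH by (intros; apply H; lia). rewrite H by lia. reflexivity.
Qed.

Lemma rsum_le f g m : (forall i, (i < m)%nat -> f i <= g i) -> rsum f m <= rsum g m.
Proof.
  intros H. induction m as [| m IH]; simpl; [lra |].
  assert (rsum f m <= rsum g m) by (apply IH; intros; apply H; lia).
  assert (f m <= g m) by (apply H; lia). lra.
Qed.

Lemma rsum_mult_l c f m : rsum (fun i => c * f i) m = c * rsum f m.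
Proof. induction m as [| m IH]; simpl; [ring |]. rewrite IH. ring. Qed.

Lemma rsum_plus f g m : rsum (fun i => f i + g i) m = rsum f m + rsum g m.
Proof. induction m as [| m IH]; simpl; [ring |]. rewrite IH. ring. Qed.

Lemma rsum_minus f g m : rsum (fun i => f i - g i) m = rsum f m - rsum g m.
Proof. induction m as [| m IH]; simpl; [ring |]. rewrite IH. ring. Qed.

Lemma rsum_const c m : rsum (fun _ => c) m = INR m * c.
Proof. induction m as [| m IH]; simpl rsum; [simpl; ring |]. rewrite IH, S_INR. ring. Qed.

Lemma rsum_le_const f c m : (forall i, (i < m)%nat -> f i <= c) -> rsum f m <= INR m * c.
Proof. intros. rewrite <- rsum_const. now apply rsum_le. Qed.

Lemma rsum_ge_const f c m : (forall i, (i < m)%nat -> c <= f i) -> INR m * c <= rsum f m.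
Proof. intros. rewrite <- rsum_const. now apply rsum_le. Qed.

Lemma rsum_ge_0 f m : (forall i, (i < m)%nat -> 0 <= f i) -> 0 <= rsum f m.
Proof. intros H. pose proof (rsum_ge_const f 0 m H). lra. Qed.

Lemma rsum_ge_term f m k :
  (forall i, (i < m)%nat -> 0 <= f i) -> (k < m)%nat -> f k <= rsum f m.
Proof.
  intros H Hk. induction m as [| m IH]; [lia | simpl].
  destruct (Nat.eq_dec k m) as [-> | Hne].
  - pose proof (rsum_ge_0 f m ltac:(intros; apply H; lia)). lra.
  - assert (f k <= rsum f m) by (apply IH; [intros; apply H |]; lia).
    assert (0 <= f m) by (apply H; lia). lra.
Qed.

Lemma dot_comm u y : dot u y = dot y u.
Proof. unfold dot. ring. Qed.

Lemma dot_0_l y : dot (0, 0) y = 0.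
Proof. unfold dot. simpl. ring. Qed.

Lemma dot_vadd_l u u' y : dot (vadd u u') y = dot u y + dot u' y.
Proof. unfold dot, vadd. simpl. ring. Qed.

Lemma dot_vscale_l c u y : dot (vscale c u) y = c * dot u y.
Proof. unfold dot, vscale. simpl. ring. Qed.

Lemma dot_vscale_r c u y : dot u (vscale c y) = c * dot u y.
Proof. unfold dot, vscale. simpl. ring. Qed.

Lemma dot_vsum_l f m y : dot (vsum f m) y = rsum (fun i => dot (f i) y) m.
Proof. induction m as [| m IH]; simpl; [apply dot_0_l |]. now rewrite dot_vadd_l, IH. Qed.

Lemma dot_self_ge_0 u : 0 <= dot u u.
Proof. unfold dot. nra. Qed.

Lemma cauchy_schwarz u y : dot u y * dot u y <= dot u u * dot y y.
Proof. unfold dot. pose proof (pow2_ge_0 (fst u * snd y - snd u * fst y)). nra. Qed.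

Lemma vnorm_le_1_dot u : vnorm u <= 1 -> dot u u <= 1.
Proof.
  unfold vnorm. intros H. rewrite <- (sqrt_sqrt (dot u u)) by apply dot_self_ge_0.
  pose proof (sqrt_pos (dot u u)). nra.
Qed.

Lemma vnorm_1_dot u : vnorm u = 1 -> dot u u = 1.
Proof.
  unfold vnorm. intros H. rewrite <- (sqrt_sqrt (dot u u)) by apply dot_self_ge_0.
  rewrite H. ring.
Qed.

Lemma vnorm_vscale_opp u : vnorm (vscale (-1) u) = vnorm u.
Proof. unfold vnorm, dot, vscale. simpl. f_equal. ring. Qed.

Lemma dot_orthonormal_expand e1 e2 : vnorm e1 = 1 -> vnorm e2 = 1 -> dot e2 e1 = 0 ->
  forall u y, dot u y = dot u e1 * dot y e1 + dot u e2 * dot y e2.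
Proof.
  intros H1 H2 H12 [u1 u2] [y1 y2]. apply vnorm_1_dot in H1, H2.
  destruct e1 as [p q], e2 as [r s]. unfold dot in *. simpl in *.
  (* [e2] is [k] times [e1] turned by a right angle, where [k = ±1] is the determinant *)
  set (k := p * s - q * r).
  assert (Er : r = - q * k).
  { assert (Hr : r + q * k = p * (r * p + s * q) + r * (1 - (p * p + q * q))) by (unfold k; ring).
    rewrite H12, H1 in Hr. lra. }
  assert (Es : s = p * k).
  { assert (Hs : s - p * k = q * (r * p + s * q) + s * (1 - (p * p + q * q))) by (unfold k; ring).
    rewrite H12, H1 in Hs. lra. }
  assert (Hk : k * k = 1).
  { rewrite Er, Es in H2.
    replace (- q * k * (- q * k) + p * k * (p * k)) with (k * k * (p * p + q * q)) in H2 by ring.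
    rewrite H1 in H2. lra. }
  rewrite Er, Es.
  replace ((u1 * p + u2 * q) * (y1 * p + y2 * q)
           + (u1 * (- q * k) + u2 * (p * k)) * (y1 * (- q * k) + y2 * (p * k)))
    with ((u1 * y1 + u2 * y2) * (p * p + q * q)
          + (u1 * y1 * q * q + u2 * y2 * p * p - (u1 * y2 + u2 * y1) * p * q) * (k * k - 1))
    by ring.
  rewrite H1, Hk. ring.
Qed.

(** * The loss threshold [1/(8 eta)] and the margin level [lambda] *)

Section Threshold.

Variables eta gamma : R.
Hypothesis eta_ge_1 : 1 <= eta.
Hypothesis gamma_pos : 0 < gamma.

Lemma theta_bounds : 0 < 1 / (8 * eta) <= 1 / 8.
Proof. split; [apply Rdiv_lt_0_compat; lra | rewrite Rle_div_l; lra]. Qed.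

Lemma expm1_theta_bounds :
  1 / (8 * eta) <= exp (1 / (8 * eta)) - 1 <= 8 / 7 * (1 / (8 * eta)).
Proof. apply expm1_bounds. pose proof theta_bounds. lra. Qed.

Lemma exp_margin_lambda : exp (- (gamma * lambda eta gamma)) = exp (1 / (8 * eta)) - 1.
Proof.
  destruct expm1_theta_bounds as [Hk1 Hk2]. destruct theta_bounds as [Ht1 Ht2].
  unfold lambda. rewrite <- Rmult_assoc, Rinv_r, Rmult_1_l by lra.
  unfold Rdiv at 1. rewrite Rmult_1_l, ln_Rinv, Ropp_involutive by lra.
  apply exp_ln. lra.
Qed.

Lemma loss_margin_lambda : loss (gamma * lambda eta gamma) = 1 / (8 * eta).
Proof.
  unfold loss. rewrite exp_margin_lambda.
  replace (1 + _) with (exp (1 / (8 * eta))) by ring. apply ln_exp.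
Qed.

Lemma margin_lambda_ge_0 : 0 <= gamma * lambda eta gamma.
Proof.
  destruct expm1_theta_bounds as [Hk1 Hk2]. destruct theta_bounds as [Ht1 Ht2].
  destruct (Rle_dec 0 (gamma * lambda eta gamma)) as [| Hneg]; [assumption | exfalso].
  pose proof (exp_le_exp 0 (- (gamma * lambda eta gamma)) ltac:(lra)) as Hexp.
  rewrite exp_0, exp_margin_lambda in Hexp. lra.
Qed.

Lemma margin_lambda_le :
  32 / gamma ^ 2 * ln (256 / gamma ^ 2) <= eta -> gamma * lambda eta gamma <= eta * gamma ^ 2 / 16.
Proof.
  intros Heta. destruct expm1_theta_bounds as [Hk1 Hk2]. destruct theta_bounds as [Ht1 Ht2].
  assert (Hg2 : 0 < gamma ^ 2) by (apply pow_lt; lra).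
  assert (Hlam : gamma * lambda eta gamma <= ln (8 * eta)).
  { rewrite <- (ln_exp (gamma * lambda eta gamma)).
    apply ln_le; [apply exp_pos |].
    replace (exp (gamma * lambda eta gamma)) with (/ exp (- (gamma * lambda eta gamma)))
      by (rewrite exp_Ropp, Rinv_inv; reflexivity).
    rewrite exp_margin_lambda.
    apply Rle_trans with (/ (1 / (8 * eta))); [apply Rinv_le_contravar; lra | right; field; lra]. }
  assert (Hsplit : ln (8 * eta) = ln (256 / gamma ^ 2) + ln (eta * gamma ^ 2 / 32)).
  { rewrite <- ln_mult by (apply Rdiv_lt_0_compat; nra). f_equal. field. lra. }
  assert (ln (256 / gamma ^ 2) <= eta * gamma ^ 2 / 32).
  { apply Rmult_le_reg_l with (32 / gamma ^ 2); [apply Rdiv_lt_0_compat; lra |].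
    replace (32 / gamma ^ 2 * (eta * gamma ^ 2 / 32)) with eta by (field; lra). lra. }
  pose proof (ln_le_id (eta * gamma ^ 2 / 32) ltac:(apply Rdiv_lt_0_compat; nra)).
  lra.
Qed.

Lemma F_le_theta_of_margins n x w : (0 < n)%nat ->
  (forall i, (i < n)%nat -> gamma * lambda eta gamma <= dot w (x i)) ->
  F n x w <= 1 / (8 * eta).
Proof.
  intros Hn Hm. assert (Hn' : 0 < INR n) by now apply lt_0_INR.
  assert (Hsum : rsum (fun i => loss (dot w (x i))) n <= INR n * (1 / (8 * eta))).
  { apply rsum_le_const. intros i Hi. rewrite <- loss_margin_lambda. now apply loss_antimono, Hm. }
  unfold F. change (/ INR n * rsum (fun i => loss (dot w (x i))) n <= 1 / (8 * eta)).
  rewrite Rmult_comm. rewrite <- Rdiv_def. rewrite Rle_div_l; lra.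
Qed.

End Threshold.

Lemma exists_nat_between r : 0 <= r -> exists N : nat, r <= INR N <= r + 1.
Proof.
  intros Hr. destruct (archimed r) as [H1 H2].
  assert (Hz : (0 <= up r)%Z) by (apply le_IZR; lra).
  exists (Z.to_nat (up r)). rewrite INR_IZR_INZ, Z2Nat.id by exact Hz. lra.
Qed.

Lemma least_index (P : nat -> Prop) :
  (exists s, P s) -> exists s, P s /\ forall k, (k < s)%nat -> ~ P k.
Proof.
  intros Hex.
  destruct (dec_inh_nat_subset_has_unique_least_element P (fun k => classic (P k)) Hex)
    as [s [[Hs Hmin] _]].
  exists s. split; [exact Hs |]. intros k Hk HPk. specialize (Hmin k HPk). lia.
Qed.

Lemma last_index_below (P : nat -> Prop) N : P 0%nat -> (0 < N)%nat ->
  exists s, (s < N)%nat /\ P s /\ forall k, (s < k < N)%nat -> ~ P k.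
Proof.
  intros H0 HN. induction N as [| N IH]; [lia |].
  destruct (classic (P N)) as [HPN | HPN].
  - exists N. repeat split; [lia | exact HPN | lia].
  - destruct N as [| N]; [contradiction |].
    destruct IH as [s [Hs [HPs Hlast]]]; [lia |].
    exists s. repeat split; [lia | exact HPs |]. intros k Hk.
    destruct (Nat.eq_dec k (S N)) as [-> | Hne]; [exact HPN | apply Hlast; lia].
Qed.

Lemma decay_le_inv (y : nat -> R) J :
  (forall k, (k <= J)%nat -> 0 <= y k) ->
  (forall k, (k < J)%nat -> y (S k) <= y k * exp (- y k)) ->
  y J * INR J <= 1.
Proof.
  intros Hpos Hrec.
  enough (H : forall k, (k <= J)%nat -> y k * INR k <= 1) by (apply H; lia).
  induction k as [| k IH]; intros Hk; [simpl; lra |].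
  specialize (IH ltac:(lia)). specialize (Hrec k ltac:(lia)).
  pose proof (Hpos k ltac:(lia)). pose proof (Hpos (S k) Hk).
  (* [exp (y k) >= 1 + y k] turns the recursion into [y (S k) <= y k / (1 + y k)] *)
  pose proof (exp_ineq1_le (y k)). pose proof (exp_pos (- y k)). pose proof (exp_opp_mul (y k)).
  assert (y (S k) * (1 + y k) <= y k) by nra.
  rewrite S_INR. pose proof (pos_INR k). nra.
Qed.

(* Sum [9/10 * a_k * A_k <= W 0 * (W k - W (S k))], where [A_k <= h k] is the sum of the earlier
   increments, and use [2 * sum a_k A_k = A ^ 2 - sum a_k ^ 2 >= A ^ 2 - amax * A]. *)
Lemma total_increment_sq_le (h W : nat -> R) (M : nat) (amin amax : R) :
  0 < amin <= amax -> 0 <= h 0%nat ->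
  (forall k, (k <= M)%nat -> 0 < W k) ->
  (forall k, (k < M)%nat -> exists a, amin <= a <= amax /\ h k + a <= h (S k) /\
     9 / 10 * a * h k <= W k * (W k - W (S k))) ->
  exists A, INR M * amin <= A /\ A * A - amax * A <= 20 / 9 * (W 0%nat * W 0%nat).
Proof.
  intros Ha Hh0 HW Hstep.
  assert (Inv : forall k, (k <= M)%nat -> exists A, INR k * amin <= A /\ 0 <= A <= h k /\
     W k <= W 0%nat /\ A * A - amax * A <= 20 / 9 * W 0%nat * (W 0%nat - W k)).
  { induction k as [| k IH]; intros Hk.
    - exists 0. simpl. repeat split; lra.
    - destruct IH as (A & H1 & H2 & H3 & H4); [lia |].
      destruct (Hstep k ltac:(lia)) as (a & Hab & Hinc & Hdec).
      pose proof (HW k ltac:(lia)). pose proof (HW (S k) Hk).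
      assert (Hdrop : 0 <= W k - W (S k)) by nra.
      assert (9 / 10 * a * A <= W 0%nat * (W k - W (S k))) by nra.
      exists (A + a). rewrite S_INR. repeat split; nra. }
  destruct (Inv M (le_n M)) as (A & H1 & _ & _ & H4).
  pose proof (HW M (le_n M)). pose proof (HW 0%nat ltac:(lia)).
  exists A. split; [exact H1 | nra].
Qed.

(** * Gradient descent in the frame [(ws, v)] *)

Lemma gd_S_dot n x eta s y :
  dot (gd n x eta (S s)) y = dot (gd n x eta s) y
    + eta / INR n * rsum (fun i => sigm (dot (gd n x eta s) (x i)) * dot (x i) y) n.
Proof.
  simpl. rewrite dot_vadd_l, dot_vscale_l. unfold gradF. rewrite dot_vscale_l, dot_vsum_l.
  rewrite (rsum_ext _ (fun i => sigm (dot (gd n x eta s) (x i)) * dot (x i) y))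
    by (intros i _; apply dot_vscale_l).
  unfold Rdiv. ring.
Qed.

Section Dynamics.

Variables (n : nat) (x : nat -> vec2) (gamma eta : R) (ws v : vec2).
Hypothesis n_pos : (0 < n)%nat.
Hypothesis x_le_1 : forall i, (i < n)%nat -> dot (x i) (x i) <= 1.
Hypothesis margin_ge : forall i, (i < n)%nat -> gamma <= dot (x i) ws.
Hypothesis ws_unit : vnorm ws = 1.
Hypothesis v_unit : vnorm v = 1.
Hypothesis v_orth_ws : dot v ws = 0.
Hypothesis gamma_pos : 0 < gamma.
Hypothesis gamma_le_1 : gamma <= 1.
Hypothesis n_le_eta : INR n <= eta.
Hypothesis eta_large : 32 / gamma ^ 2 * ln (256 / gamma ^ 2) <= eta.

(* [hat s] and [tl s] are the paper's ŵ_s and w̃_s; [z s i] is the margin of [x i] at step [s]. *)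
Local Notation hat s := (dot (gd n x eta s) ws).
Local Notation tl s := (dot (gd n x eta s) v).
Local Notation z s i := (dot (gd n x eta s) (x i)).
Local Notation xw i := (dot (x i) ws).
Local Notation xv i := (dot (x i) v).
Local Notation risk s := (F n x (gd n x eta s)).
Local Notation theta := (1 / (8 * eta)).
Local Notation mlam := (gamma * lambda eta gamma).
Local Notation rate := (eta / INR n).

Lemma INR_n_ge_1 : 1 <= INR n.
Proof. apply (le_INR 1). lia. Qed.

Lemma eta_ge_1 : 1 <= eta.
Proof. pose proof INR_n_ge_1. lra. Qed.

Lemma rate_ge_1 : 1 <= rate.
Proof. pose proof INR_n_ge_1. rewrite <- Rle_div_r; lra. Qed.

Lemma n_theta_le : INR n * theta <= 1 / 8.
Proof.
  destruct (theta_bounds eta eta_ge_1).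
  apply Rle_trans with (eta * theta); [apply Rmult_le_compat_r; lra |].
  right. field. pose proof eta_ge_1. lra.
Qed.

Lemma eta_ge_160 : 160 / gamma ^ 2 <= eta.
Proof.
  assert (Hg2 : 0 < gamma ^ 2 <= 1) by (split; [apply pow_lt | simpl]; nra).
  assert (H5 : 5 <= ln (256 / gamma ^ 2)).
  { rewrite <- (ln_exp 5). apply ln_le; [apply exp_pos |].
    pose proof exp_5_le. assert (256 <= 256 / gamma ^ 2) by (rewrite <- Rle_div_r; nra). lra. }
  assert (0 < 32 / gamma ^ 2) by (apply Rdiv_lt_0_compat; lra).
  replace (160 / gamma ^ 2) with (32 / gamma ^ 2 * 5) by (field; lra). nra.
Qed.

Lemma z_expand s i : z s i = hat s * xw i + tl s * xv i.
Proof. apply dot_orthonormal_expand; assumption. Qed.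

Lemma xw_xv_bounds i : (i < n)%nat -> xw i <= 1 /\ -1 <= xv i <= 1.
Proof.
  intros Hi. pose proof (x_le_1 i Hi) as Hx.
  rewrite (dot_orthonormal_expand ws v ws_unit v_unit v_orth_ws (x i) (x i)) in Hx.
  split; [| split]; nra.
Qed.

Lemma hat_le_S s : hat s <= hat (S s).
Proof.
  rewrite gd_S_dot. pose proof rate_ge_1.
  assert (0 <= rsum (fun i => sigm (z s i) * xw i) n).
  { apply rsum_ge_0. intros i Hi. pose proof (sigm_pos (z s i)). pose proof (margin_ge i Hi). nra. }
  nra.
Qed.

Lemma hat_monotone s k : (s <= k)%nat -> hat s <= hat k.
Proof.
  induction 1 as [| k _ IH]; [lra |]. pose proof (hat_le_S k). lra.
Qed.

Lemma hat_ge_0 s : 0 <= hat s.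
Proof.
  pose proof (hat_monotone 0 s ltac:(lia)) as Hmono. simpl gd in Hmono. rewrite dot_0_l in Hmono.
  exact Hmono.
Qed.

Lemma lambda_le_hat s : (1 <= s)%nat -> lambda eta gamma <= hat s.
Proof.
  intros Hs. pose proof (hat_monotone 1 s Hs). pose proof INR_n_ge_1.
  assert (Hhat1 : eta * gamma / 2 <= hat 1).
  { rewrite gd_S_dot. simpl gd. rewrite dot_0_l.
    assert (INR n * (gamma / 2) <= rsum (fun i => sigm (dot (0, 0) (x i)) * xw i) n).
    { apply rsum_ge_const. intros i Hi. rewrite dot_0_l, sigm_0. pose proof (margin_ge i Hi). lra. }
    replace (eta * gamma / 2) with (rate * (INR n * (gamma / 2))) by (field; lra).
    assert (0 <= rate) by (pose proof rate_ge_1; lra). nra. }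
  pose proof (margin_lambda_le eta gamma eta_ge_1 gamma_pos eta_large).
  assert (lambda eta gamma <= eta * gamma / 16).
  { apply Rmult_le_reg_l with gamma; [lra |].
    replace (gamma * (eta * gamma / 16)) with (eta * gamma ^ 2 / 16) by field. lra. }
  pose proof eta_ge_1. nra.
Qed.

Lemma mlam_le_margin s i : (1 <= s)%nat -> (i < n)%nat -> 0 <= tl s * xv i -> mlam <= z s i.
Proof.
  intros Hs Hi Htv. rewrite z_expand. pose proof (lambda_le_hat s Hs). pose proof (margin_ge i Hi).
  pose proof (hat_ge_0 s). nra.
Qed.

Lemma risk_le_theta_of_tl_0 s : (1 <= s)%nat -> tl s = 0 -> risk s <= theta.
Proof.
  intros Hs Htl. apply (F_le_theta_of_margins eta gamma eta_ge_1 gamma_pos); [assumption |].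
  intros i Hi. apply mlam_le_margin; [assumption | assumption |]. rewrite Htl. lra.
Qed.

Lemma risk_sum s : INR n * risk s = rsum (fun i => loss (z s i)) n.
Proof.
  pose proof INR_n_ge_1. unfold F.
  change (INR n * (/ INR n * rsum (fun i => loss (z s i)) n) = rsum (fun i => loss (z s i)) n).
  field. lra.
Qed.

Lemma hat_S_ge s : risk s > theta -> hat s + gamma / 16 <= hat (S s).
Proof.
  intros Hrisk. rewrite gd_S_dot.
  pose proof rate_ge_1. pose proof INR_n_ge_1.
  set (f := fun i => sigm (z s i) * xw i).
  assert (Hf : forall i, (i < n)%nat -> 0 <= f i).
  { intros i Hi. unfold f. pose proof (sigm_pos (z s i)). pose proof (margin_ge i Hi). nra. }
  enough (gamma / 16 <= rate * rsum f n) by lra.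
  destruct (classic (exists k, (k < n)%nat /\ z s k <= 0)) as [[k [Hk Hz]] | Hpos].
  - pose proof (rsum_ge_term f n k Hf Hk).
    assert (gamma / 2 <= f k).
    { unfold f. pose proof (sigm_ge_half _ Hz). pose proof (margin_ge k Hk). nra. }
    nra.
  - assert (Hpt : forall i, (i < n)%nat -> gamma / 2 * loss (z s i) <= f i).
    { intros i Hi. assert (Hz : 0 <= z s i).
      { apply Rnot_lt_le. intros Hneg. apply Hpos. exists i. split; [exact Hi | lra]. }
      pose proof (loss_half_le_sigm _ Hz). pose proof (loss_ge_0 (z s i)). pose proof (margin_ge i Hi).
      unfold f. nra. }
    pose proof (rsum_le _ _ n Hpt) as Hsum. rewrite rsum_mult_l, <- risk_sum in Hsum.
    replace (gamma / 16) with (rate * (gamma / 2 * (INR n * theta))) by (field; lra).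
    apply Rmult_le_compat_l; [lra |].
    assert (gamma / 2 * (INR n * theta) <= gamma / 2 * (INR n * risk s)).
    { apply Rmult_le_compat_l; [lra |]. apply Rmult_le_compat_l; lra. }
    lra.
Qed.

Lemma tl_step_abs_le s : Rabs (tl (S s) - tl s) <= eta.
Proof.
  rewrite gd_S_dot. pose proof rate_ge_1. pose proof INR_n_ge_1.
  replace (tl s + rate * rsum (fun i => sigm (z s i) * xv i) n - tl s)
    with (rate * rsum (fun i => sigm (z s i) * xv i) n) by ring.
  assert (Hterm : forall i, (i < n)%nat -> -1 <= sigm (z s i) * xv i <= 1).
  { intros i Hi. pose proof (sigm_pos (z s i)). pose proof (sigm_le_1 (z s i)).
    pose proof (xw_xv_bounds i Hi). split; nra. }
  pose proof (rsum_le_const (fun i => sigm (z s i) * xv i) 1 n ltac:(intros i Hi; apply Hterm, Hi)).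
  pose proof (rsum_ge_const (fun i => sigm (z s i) * xv i) (-1) n ltac:(intros i Hi; apply Hterm, Hi)).
  assert (rate * INR n = eta) by (field; lra).
  apply Rabs_le. split; nra.
Qed.

Lemma exp_neg_z_le s i : (i < n)%nat ->
  exp (- z s i) <= exp (- (gamma * hat s)) * exp (- (tl s * xv i)).
Proof.
  intros Hi. rewrite <- exp_plus. apply exp_le_exp. rewrite z_expand.
  pose proof (margin_ge i Hi). pose proof (hat_ge_0 s). nra.
Qed.

Lemma tl_S_le s : (1 <= s)%nat -> 0 < tl s -> tl (S s) <= tl s + 1 / 7.
Proof.
  intros Hs Htl. rewrite gd_S_dot.
  pose proof rate_ge_1. pose proof INR_n_ge_1.
  destruct (expm1_theta_bounds eta eta_ge_1) as [_ Hk].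
  assert (Hterm : forall i, (i < n)%nat -> sigm (z s i) * xv i <= exp (- mlam)).
  { intros i Hi. pose proof (sigm_pos (z s i)). pose proof (exp_pos (- mlam)).
    pose proof (xw_xv_bounds i Hi).
    destruct (Rle_dec 0 (xv i)) as [Hv | Hv]; [| nra].
    pose proof (mlam_le_margin s i Hs Hi ltac:(nra)).
    pose proof (sigm_le_exp (z s i)). pose proof (exp_le_exp (- z s i) (- mlam) ltac:(lra)).
    nra. }
  pose proof (rsum_le_const _ _ n Hterm) as Hsum.
  rewrite (exp_margin_lambda eta gamma eta_ge_1 gamma_pos) in Hsum.
  assert (rate * rsum (fun i => sigm (z s i) * xv i) n <= eta * (exp theta - 1)).
  { replace (eta * (exp theta - 1)) with (rate * (INR n * (exp theta - 1))) by (field; lra).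
    apply Rmult_le_compat_l; lra. }
  assert (eta * (exp theta - 1) <= 1 / 7).
  { replace (1 / 7) with (eta * (8 / 7 * theta)) by (field; lra). apply Rmult_le_compat_l; lra. }
  lra.
Qed.

Lemma exp_high_margin_le s : mlam + 3 <= gamma * hat s ->
  exp (- (gamma * hat s)) <= 8 / 7 * (2 / 5) ^ 3 * theta.
Proof.
  intros Hh. destruct (expm1_theta_bounds eta eta_ge_1) as [Hk1 Hk2].
  replace (- (gamma * hat s)) with (- mlam + - (gamma * hat s - mlam)) by ring.
  rewrite exp_plus, (exp_margin_lambda eta gamma eta_ge_1 gamma_pos).
  pose proof (exp_le_exp (- (gamma * hat s - mlam)) (-3) ltac:(lra)). pose proof exp_neg3_le.
  pose proof (exp_pos (- (gamma * hat s - mlam))).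
  replace (8 / 7 * (2 / 5) ^ 3 * theta) with (8 / 7 * theta * (2 / 5) ^ 3) by ring.
  apply Rmult_le_compat; lra.
Qed.

Let pos_flow s := rsum (fun i => sigm (z s i) * Rmax (xv i) 0) n.
Let neg_flow s := rsum (fun i => sigm (z s i) * Rmax (- xv i) 0) n.

Lemma neg_flow_ge_term s k : (k < n)%nat -> sigm (z s k) * Rmax (- xv k) 0 <= neg_flow s.
Proof.
  intros Hk. apply (rsum_ge_term (fun i => sigm (z s i) * Rmax (- xv i) 0)); [| exact Hk].
  intros i _. pose proof (sigm_pos (z s i)). pose proof (Rmax_r (- xv i) 0). nra.
Qed.

Lemma neg_flow_ge_0 s : 0 <= neg_flow s.
Proof.
  apply rsum_ge_0. intros i _. pose proof (sigm_pos (z s i)). pose proof (Rmax_r (- xv i) 0). nra.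
Qed.

Lemma tl_S_flows s : tl (S s) = tl s + rate * (pos_flow s - neg_flow s).
Proof.
  rewrite gd_S_dot. unfold pos_flow, neg_flow. rewrite <- rsum_minus.
  do 2 f_equal. apply rsum_ext. intros i _.
  destruct (Rle_dec 0 (xv i)).
  - rewrite Rmax_left, Rmax_right by lra. ring.
  - rewrite Rmax_right, Rmax_left by lra. ring.
Qed.

Lemma pos_flow_le s : 0 < tl s -> mlam + 3 <= gamma * hat s ->
  tl s * pos_flow s <= INR n * (3 / 100 * theta).
Proof.
  intros Htl Hh. pose proof (exp_high_margin_le s Hh). pose proof exp_neg1_le.
  unfold pos_flow. rewrite <- rsum_mult_l. apply rsum_le_const. intros i Hi.
  pose proof (sigm_pos (z s i)). destruct (theta_bounds eta eta_ge_1).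
  destruct (Rle_dec 0 (xv i)) as [Hv | Hv]; [| rewrite Rmax_right by lra; nra].
  rewrite Rmax_left by lra.
  (* the factor [tl] is absorbed by [y * exp (- y) <= exp (-1)] for [y = tl * xv] *)
  pose proof (mul_exp_opp_le (tl s * xv i)). pose proof (exp_pos (- (tl s * xv i))).
  pose proof (exp_neg_z_le s i Hi). pose proof (sigm_le_exp (z s i)).
  pose proof (exp_pos (- (gamma * hat s))).
  assert (Htv : 0 <= tl s * xv i) by nra.
  assert (tl s * (sigm (z s i) * xv i)
          <= exp (- (gamma * hat s)) * (tl s * xv i * exp (- (tl s * xv i)))).
  { replace (tl s * (sigm (z s i) * xv i)) with (tl s * xv i * sigm (z s i)) by ring.
    replace (exp (- (gamma * hat s)) * (tl s * xv i * exp (- (tl s * xv i))))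
      with (tl s * xv i * (exp (- (gamma * hat s)) * exp (- (tl s * xv i)))) by ring.
    apply Rmult_le_compat_l; lra. }
  assert (exp (- (gamma * hat s)) * (tl s * xv i * exp (- (tl s * xv i)))
          <= 8 / 7 * (2 / 5) ^ 3 * theta * (2 / 5)).
  { apply Rmult_le_compat; [lra | apply Rmult_le_pos; lra | lra | lra]. }
  lra.
Qed.

Lemma neg_flow_ge_of_neg_margin s k : (k < n)%nat -> z s k < 0 -> 0 < tl s ->
  hat s * xw k <= 2 * (tl s * neg_flow s).
Proof.
  intros Hk Hz Htl. pose proof (neg_flow_ge_term s k Hk) as Hterm.
  rewrite z_expand in Hz. pose proof (hat_ge_0 s). pose proof (margin_ge k Hk).
  assert (Hv : 0 < - xv k) by nra.
  rewrite Rmax_left in Hterm by lra.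
  pose proof (sigm_ge_half (z s k) ltac:(rewrite z_expand; lra)).
  assert (- xv k / 2 <= neg_flow s) by nra.
  assert (tl s * (- xv k / 2) <= tl s * neg_flow s) by (apply Rmult_le_compat_l; lra).
  lra.
Qed.

(* An example with [tl * max (- xv) 0 <= d] has loss at most [exp (- mlam - 1)];
   any other one has weight at least [d / 2]. *)
Lemma neg_flow_term_ge s i : (i < n)%nat -> 0 <= z s i -> 0 < tl s ->
  let d := gamma * hat s - mlam - 1 in 0 <= d ->
  d / 2 * (loss (z s i) - exp (- mlam) * exp (-1)) <= tl s * (sigm (z s i) * Rmax (- xv i) 0).
Proof.
  intros Hi Hz Htl d Hd.
  pose proof (loss_ge_0 (z s i)). pose proof (sigm_pos (z s i)).
  pose proof (exp_pos (- mlam)). pose proof (exp_pos (-1)).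
  pose proof (Rmax_r (- xv i) 0). pose proof (Rmax_l (- xv i) 0).
  set (bm := Rmax (- xv i) 0) in *.
  destruct (Rle_dec (tl s * bm) d) as [Hsmall | Hlarge].
  - assert (loss (z s i) <= exp (- mlam) * exp (-1)).
    { apply Rle_trans with (exp (- z s i)); [apply loss_le_exp |].
      rewrite <- exp_plus. apply exp_le_exp.
      rewrite z_expand. pose proof (margin_ge i Hi). pose proof (hat_ge_0 s).
      assert (gamma * hat s <= hat s * xw i) by nra.
      assert (- (tl s * bm) <= tl s * xv i) by nra.
      unfold d in Hsmall. lra. }
    assert (d / 2 * (loss (z s i) - exp (- mlam) * exp (-1)) <= 0) by (apply Rmult_le_0_l; lra).
    assert (0 <= tl s * (sigm (z s i) * bm)) by (apply Rmult_le_pos; [lra | apply Rmult_le_pos; lra]).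
    lra.
  - pose proof (loss_half_le_sigm _ Hz).
    assert (tl s * bm * (loss (z s i) / 2) <= tl s * (sigm (z s i) * bm)).
    { replace (tl s * (sigm (z s i) * bm)) with (tl s * bm * sigm (z s i)) by ring.
      apply Rmult_le_compat_l; nra. }
    assert (d / 2 * loss (z s i) <= tl s * bm * (loss (z s i) / 2)) by nra.
    assert (0 <= d / 2 * (exp (- mlam) * exp (-1)))
      by (apply Rmult_le_pos; [lra | apply Rmult_le_pos; lra]).
    nra.
Qed.

Lemma neg_flow_ge_of_nonneg_margins s : (forall i, (i < n)%nat -> 0 <= z s i) ->
  0 < tl s -> mlam + 3 <= gamma * hat s -> risk s > theta ->
  INR n * theta / 2 <= tl s * neg_flow s.
Proof.
  intros Hz Htl Hh Hrisk.
  destruct (expm1_theta_bounds eta eta_ge_1) as [Hk1 Hk2]. destruct (theta_bounds eta eta_ge_1).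
  pose proof exp_neg1_le. pose proof (exp_pos (-1)). pose proof (exp_pos (- mlam)).
  set (d := gamma * hat s - mlam - 1).
  set (c := exp (- mlam) * exp (-1)).
  pose proof (rsum_le _ _ n (fun i Hi => neg_flow_term_ge s i Hi (Hz i Hi) Htl ltac:(lra))) as Hsum.
  cbv zeta in Hsum. fold d c in Hsum.
  rewrite rsum_mult_l, rsum_minus, rsum_const, <- risk_sum, rsum_mult_l in Hsum.
  fold (neg_flow s) in Hsum.
  assert (Hc : c <= 8 / 7 * theta * (2 / 5))
    by (unfold c; rewrite (exp_margin_lambda eta gamma eta_ge_1 gamma_pos); apply Rmult_le_compat; lra).
  assert (Hnc : INR n * c <= 16 / 35 * (INR n * theta)).
  { replace (16 / 35 * (INR n * theta)) with (INR n * (8 / 7 * theta * (2 / 5)))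
      by (field; pose proof eta_ge_1; lra).
    apply Rmult_le_compat_l; [apply pos_INR | exact Hc]. }
  assert (INR n * theta <= INR n * risk s) by (apply Rmult_le_compat_l; [apply pos_INR | lra]).
  assert (0 <= INR n * theta) by (apply Rmult_le_pos; [apply pos_INR | lra]).
  assert (1 * (INR n * risk s - INR n * c) <= d / 2 * (INR n * risk s - INR n * c))
    by (apply Rmult_le_compat_r; unfold d; lra).
  lra.
Qed.

Lemma neg_flow_ge s : 0 < tl s -> mlam + 3 <= gamma * hat s -> risk s > theta ->
  INR n * theta / 2 <= tl s * neg_flow s.
Proof.
  intros Htl Hh Hrisk.
  destruct (classic (exists k, (k < n)%nat /\ z s k < 0)) as [[k [Hk Hz]] | Hpos].
  - pose proof (neg_flow_ge_of_neg_margin s k Hk Hz Htl). pose proof n_theta_le.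
    pose proof (margin_lambda_ge_0 eta gamma eta_ge_1 gamma_pos).
    pose proof (margin_ge k Hk). pose proof (hat_ge_0 s). nra.
  - apply neg_flow_ge_of_nonneg_margins; [| assumption ..].
    intros i Hi. destruct (Rle_dec 0 (z s i)); [assumption |].
    exfalso. apply Hpos. exists i. split; [assumption | lra].
Qed.

Lemma tl_S_sub_le s : 0 < tl s -> mlam + 3 <= gamma * hat s -> risk s > theta ->
  tl (S s) - tl s <= - (9 / 10) * rate * neg_flow s.
Proof.
  intros Htl Hh Hrisk. pose proof (pos_flow_le s Htl Hh). pose proof (neg_flow_ge s Htl Hh Hrisk).
  destruct (theta_bounds eta eta_ge_1). pose proof INR_n_ge_1. pose proof rate_ge_1.
  assert (pos_flow s <= neg_flow s / 10).
  { apply Rmult_le_reg_l with (tl s); [assumption |].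
    assert (0 <= INR n * theta) by nra. lra. }
  rewrite tl_S_flows. nra.
Qed.

Lemma tl_S_le_of_high_margin s : 0 < tl s -> mlam + 3 <= gamma * hat s -> risk s > theta ->
  tl (S s) <= tl s.
Proof.
  intros Htl Hh Hrisk. pose proof (tl_S_sub_le s Htl Hh Hrisk). pose proof (neg_flow_ge_0 s).
  pose proof rate_ge_1. nra.
Qed.

Lemma step_of_neg_margin s k : (k < n)%nat -> z s k < 0 -> 0 < tl s ->
  mlam + 3 <= gamma * hat s -> risk s > theta ->
  hat s + rate * xw k / 2 <= hat (S s) /\
  9 / 10 * (rate * xw k / 2) * hat s <= tl s * (tl s - tl (S s)).
Proof.
  intros Hk Hz Htl Hh Hrisk. pose proof rate_ge_1. pose proof (margin_ge k Hk).
  pose proof (sigm_ge_half (z s k) ltac:(lra)).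
  split.
  - rewrite gd_S_dot.
    assert (sigm (z s k) * xw k <= rsum (fun i => sigm (z s i) * xw i) n).
    { apply (rsum_ge_term (fun i => sigm (z s i) * xw i)); [| exact Hk].
      intros i Hi. pose proof (sigm_pos (z s i)). pose proof (margin_ge i Hi). nra. }
    assert (rate * (xw k / 2) <= rate * rsum (fun i => sigm (z s i) * xw i) n)
      by (apply Rmult_le_compat_l; nra).
    lra.
  - pose proof (tl_S_sub_le s Htl Hh Hrisk). pose proof (neg_flow_ge_of_neg_margin s k Hk Hz Htl).
    pose proof (neg_flow_ge_0 s).
    assert (9 / 10 * rate * (tl s * neg_flow s) <= tl s * (tl s - tl (S s))) by nra.
    assert (9 / 10 * rate * (hat s * xw k / 2) <= 9 / 10 * rate * (tl s * neg_flow s))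
      by (apply Rmult_le_compat_l; lra).
    nra.
Qed.

Let neg_mass s := rsum (fun i => if Rle_dec (xv i) 0 then exp (- z s i) else 0) n.

Lemma neg_mass_ge_0 s : 0 <= neg_mass s.
Proof.
  apply rsum_ge_0. intros i _. destruct (Rle_dec (xv i) 0); [left; apply exp_pos | lra].
Qed.

Lemma z_S_ge_of_xv_nonpos s i : (i < n)%nat -> tl (S s) <= tl s -> xv i <= 0 ->
  z s i + gamma * (hat (S s) - hat s) <= z (S s) i.
Proof.
  intros Hi Htl Hv. rewrite !z_expand. pose proof (margin_ge i Hi). pose proof (hat_le_S s). nra.
Qed.

Lemma nonneg_margins_S s : tl (S s) <= tl s -> 0 < tl (S s) ->
  (forall i, (i < n)%nat -> 0 <= z s i) -> forall i, (i < n)%nat -> 0 <= z (S s) i.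
Proof.
  intros Htl Htl' Hz i Hi. destruct (Rle_dec (xv i) 0) as [Hv | Hv].
  - pose proof (z_S_ge_of_xv_nonpos s i Hi Htl Hv). pose proof (hat_le_S s). pose proof (Hz i Hi). nra.
  - rewrite z_expand. pose proof (hat_ge_0 (S s)). pose proof (margin_ge i Hi). nra.
Qed.

(* [hat] grows by at least [rate * gamma / 2 * neg_mass], and the margins counted in [neg_mass]
   grow [gamma] times as fast. *)
Lemma neg_mass_S_le s : tl (S s) <= tl s -> (forall i, (i < n)%nat -> 0 <= z s i) ->
  neg_mass (S s) <= neg_mass s * exp (- (gamma ^ 2 * rate / 2 * neg_mass s)).
Proof.
  intros Htl Hz. pose proof rate_ge_1. pose proof (neg_mass_ge_0 s).
  set (dh := hat (S s) - hat s).
  assert (Hmass : neg_mass (S s) <= neg_mass s * exp (- (gamma * dh))).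
  { unfold neg_mass. rewrite Rmult_comm, <- rsum_mult_l. apply rsum_le. intros i Hi.
    destruct (Rle_dec (xv i) 0) as [Hv | Hv]; [| pose proof (exp_pos (- (gamma * dh))); lra].
    pose proof (z_S_ge_of_xv_nonpos s i Hi Htl Hv).
    rewrite Rmult_comm, <- exp_plus. apply exp_le_exp. unfold dh in *. lra. }
  assert (Hdh : gamma / 2 * neg_mass s <= rsum (fun i => sigm (z s i) * xw i) n).
  { unfold neg_mass. rewrite <- rsum_mult_l. apply rsum_le. intros i Hi.
    pose proof (sigm_pos (z s i)). pose proof (margin_ge i Hi).
    pose proof (sigm_ge_exp_half _ (Hz i Hi)). pose proof (exp_pos (- z s i)).
    destruct (Rle_dec (xv i) 0); nra. }
  assert (gamma ^ 2 * rate / 2 * neg_mass s <= gamma * dh).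
  { unfold dh. rewrite gd_S_dot.
    replace (gamma ^ 2 * rate / 2 * neg_mass s) with (gamma * (rate * (gamma / 2 * neg_mass s)))
      by (simpl; field; pose proof INR_n_ge_1; lra).
    apply Rmult_le_compat_l; [lra |].
    replace (hat s + rate * rsum (fun i => sigm (z s i) * xw i) n - hat s)
      with (rate * rsum (fun i => sigm (z s i) * xw i) n) by ring.
    apply Rmult_le_compat_l; lra. }
  pose proof (exp_le_exp (- (gamma * dh)) (- (gamma ^ 2 * rate / 2 * neg_mass s)) ltac:(lra)).
  assert (neg_mass s * exp (- (gamma * dh)) <= neg_mass s * exp (- (gamma ^ 2 * rate / 2 * neg_mass s)))
    by (apply Rmult_le_compat_l; lra).
  lra.
Qed.

Lemma risk_le_neg_mass s : 0 < tl s -> mlam + 3 <= gamma * hat s ->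
  INR n * risk s <= neg_mass s + INR n * (8 / 7 * (2 / 5) ^ 3 * theta).
Proof.
  intros Htl Hh. pose proof (exp_high_margin_le s Hh).
  rewrite risk_sum. unfold neg_mass. rewrite <- rsum_const, <- rsum_plus.
  apply rsum_le. intros i Hi.
  pose proof (loss_le_exp (z s i)). pose proof (exp_pos (- z s i)).
  destruct (Rle_dec (xv i) 0) as [Hv | Hv]; [pose proof (exp_pos (- (gamma * hat s))); lra |].
  pose proof (exp_neg_z_le s i Hi).
  pose proof (exp_le_exp (- (tl s * xv i)) 0 ltac:(nra)) as Hle1. rewrite exp_0 in Hle1.
  pose proof (exp_pos (- (gamma * hat s))). pose proof (exp_pos (- (tl s * xv i))).
  assert (exp (- (gamma * hat s)) * exp (- (tl s * xv i)) <= exp (- (gamma * hat s))) by nra.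
  lra.
Qed.

Lemma hat_ge_linear u N : (forall k, (k < N)%nat -> risk (u + k) > theta) ->
  hat u + INR N * (gamma / 16) <= hat (u + N).
Proof.
  induction N as [| N IH]; intros Hrisk; [rewrite Nat.add_0_r; simpl; lra |].
  rewrite S_INR, Nat.add_succ_r.
  pose proof (IH ltac:(intros k Hk; apply Hrisk; lia)).
  pose proof (hat_S_ge (u + N) (Hrisk N ltac:(lia))).
  lra.
Qed.

Lemma tl_le_linear u N : (1 <= u)%nat -> (forall k, (k < N)%nat -> 0 < tl (u + k)) ->
  tl (u + N) <= tl u + INR N / 7.
Proof.
  intros Hu. induction N as [| N IH]; intros Htl; [rewrite Nat.add_0_r; simpl; lra |].
  rewrite S_INR, Nat.add_succ_r.
  pose proof (IH ltac:(intros k Hk; apply Htl; lia)).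
  pose proof (tl_S_le (u + N) ltac:(lia) (Htl N ltac:(lia))).
  lra.
Qed.

Lemma risk_lt_theta_of_small_neg_mass s : 0 < tl s -> mlam + 3 <= gamma * hat s ->
  neg_mass s * (9 * eta) <= INR n -> risk s < theta.
Proof.
  intros Htl Hh Hmass. pose proof (risk_le_neg_mass s Htl Hh).
  pose proof INR_n_ge_1. pose proof eta_ge_1.
  assert (Heta_theta : eta * theta = 1 / 8) by (field; lra).
  assert (eta * (INR n * risk s) <= INR n / 9 + INR n * (8 / 7 * (2 / 5) ^ 3 / 8)).
  { apply Rle_trans with (eta * (neg_mass s + INR n * (8 / 7 * (2 / 5) ^ 3 * theta)));
      [apply Rmult_le_compat_l; lra |].
    replace (eta * (neg_mass s + INR n * (8 / 7 * (2 / 5) ^ 3 * theta)))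
      with (neg_mass s * (9 * eta) / 9 + INR n * (8 / 7 * (2 / 5) ^ 3) * (eta * theta))
      by (field; lra).
    rewrite Heta_theta. lra. }
  apply (Rmult_lt_reg_l (eta * INR n)); [nra |].
  replace (eta * INR n * theta) with (INR n / 8) by (field; lra).
  lra.
Qed.

Lemma nonneg_margins_persist s0 J : (forall i, (i < n)%nat -> 0 <= z s0 i) ->
  (forall k, (k < J)%nat -> 0 < tl (s0 + S k) /\ tl (s0 + S k) <= tl (s0 + k)) ->
  forall k, (k <= J)%nat -> forall i, (i < n)%nat -> 0 <= z (s0 + k) i.
Proof.
  intros Hz0 Hstep. induction k as [| k IH]; intros Hk; [now rewrite Nat.add_0_r |].
  destruct (Hstep k ltac:(lia)) as [Htl Hd]. rewrite Nat.add_succ_r in *.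
  apply nonneg_margins_S; [exact Hd | exact Htl | apply IH; lia].
Qed.

Lemma no_long_nonneg_margin_phase s0 J :
  (forall i, (i < n)%nat -> 0 <= z s0 i) -> mlam + 3 <= gamma * hat s0 ->
  (forall k, (k <= J)%nat -> 0 < tl (s0 + k) /\ risk (s0 + k) > theta) ->
  18 / gamma ^ 2 <= INR J -> False.
Proof.
  intros Hz0 Hh Hwin HJ.
  assert (Hhigh : forall k, mlam + 3 <= gamma * hat (s0 + k))
    by (intros k; pose proof (hat_monotone s0 (s0 + k) ltac:(lia)); nra).
  assert (Hstep : forall k, (k < J)%nat -> 0 < tl (s0 + S k) /\ tl (s0 + S k) <= tl (s0 + k)).
  { intros k Hk. split; [apply (Hwin (S k) Hk) |]. rewrite Nat.add_succ_r.
    destruct (Hwin k ltac:(lia)). now apply tl_S_le_of_high_margin. }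
  pose proof (nonneg_margins_persist s0 J Hz0 Hstep) as Hz.
  pose proof rate_ge_1. pose proof INR_n_ge_1. pose proof eta_ge_1.
  assert (Hg2 : 0 < gamma ^ 2) by (apply pow_lt; lra).
  set (c := gamma ^ 2 * rate / 2).
  assert (Hc : 0 < c) by (unfold c; apply Rdiv_lt_0_compat; [apply Rmult_lt_0_compat |]; lra).
  assert (HyJ : c * neg_mass (s0 + J) * INR J <= 1).
  { apply (decay_le_inv (fun k => c * neg_mass (s0 + k)) J).
    - intros k _. pose proof (neg_mass_ge_0 (s0 + k)). nra.
    - intros k Hk. destruct (Hstep k Hk) as [_ Hd]. rewrite Nat.add_succ_r in *.
      pose proof (neg_mass_S_le (s0 + k) Hd (Hz k ltac:(lia))) as Hm. fold c in Hm.
      apply (Rmult_le_compat_l c) in Hm; [| lra].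
      rewrite <- Rmult_assoc in Hm. exact Hm. }
  assert (Hmass : neg_mass (s0 + J) * (9 * eta) <= INR n).
  { pose proof (neg_mass_ge_0 (s0 + J)).
    assert (Hc18 : c * neg_mass (s0 + J) * (18 / gamma ^ 2) <= 1).
    { apply Rle_trans with (c * neg_mass (s0 + J) * INR J); [| exact HyJ].
      apply Rmult_le_compat_l; [nra | exact HJ]. }
    replace (neg_mass (s0 + J) * (9 * eta)) with (c * neg_mass (s0 + J) * (18 / gamma ^ 2) * INR n)
      by (unfold c; field; lra).
    apply Rle_trans with (1 * INR n); [apply Rmult_le_compat_r; lra | lra]. }
  destruct (Hwin J (le_n J)) as [HtlJ HriskJ].
  pose proof (risk_lt_theta_of_small_neg_mass (s0 + J) HtlJ (Hhigh J) Hmass). lra.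
Qed.

Lemma no_long_neg_margin_phase s0 M :
  mlam + 3 <= gamma * hat s0 -> tl s0 <= 21 / 20 * eta ->
  (forall k, (k <= M)%nat -> 0 < tl (s0 + k) /\ risk (s0 + k) > theta) ->
  (forall k, (k < M)%nat -> exists i, (i < n)%nat /\ z (s0 + k) i < 0) ->
  4 * INR n / gamma <= INR M -> False.
Proof.
  intros Hh Htl0 Hwin Hneg HM.
  pose proof rate_ge_1. pose proof INR_n_ge_1. pose proof eta_ge_1.
  assert (Hhigh : forall k, mlam + 3 <= gamma * hat (s0 + k))
    by (intros k; pose proof (hat_monotone s0 (s0 + k) ltac:(lia)); nra).
  destruct (total_increment_sq_le (fun k => hat (s0 + k)) (fun k => tl (s0 + k)) M
              (rate * gamma / 2) (rate / 2)) as (A & HA & HAsq).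
  - split; [apply Rdiv_lt_0_compat; nra | nra].
  - apply hat_ge_0.
  - intros k Hk. apply (Hwin k Hk).
  - intros k Hk. destruct (Hneg k Hk) as [i [Hi Hzi]]. destruct (Hwin k ltac:(lia)) as [Htl Hrisk].
    destruct (step_of_neg_margin (s0 + k) i Hi Hzi Htl (Hhigh k) Hrisk) as [Hup Hdown].
    pose proof (margin_ge i Hi). pose proof (xw_xv_bounds i Hi).
    exists (rate * xw i / 2). rewrite Nat.add_succ_r.
    split; [split; nra | split; assumption].
  - cbv beta in HAsq. rewrite Nat.add_0_r in HAsq.
    (* the total increase [A >= 2 eta] of [hat] is more than the drop of [tl] can pay for *)
    assert (HA2 : 2 * eta <= A).
    { apply Rle_trans with (INR M * (rate * gamma / 2)); [| exact HA].
      replace (2 * eta) with (4 * INR n / gamma * (rate * gamma / 2)) by (field; lra).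
      apply Rmult_le_compat_r; [apply Rlt_le, Rdiv_lt_0_compat; nra | exact HM]. }
    assert (rate / 2 <= eta / 2) by (apply Rmult_le_compat_r; [lra | rewrite Rle_div_l; nra]).
    pose proof (Hwin 0%nat ltac:(lia)) as [Htl _]. rewrite Nat.add_0_r in Htl.
    assert (tl s0 * tl s0 <= 21 / 20 * eta * (21 / 20 * eta)) by nra.
    nra.
Qed.

Lemma burn_in u NA : (1 <= u)%nat -> tl u <= eta ->
  (forall k, (k < NA)%nat -> 0 < tl (u + k) /\ risk (u + k) > theta) ->
  48 / gamma ^ 2 <= INR NA <= 48 / gamma ^ 2 + 1 ->
  mlam + 3 <= gamma * hat (u + NA) /\ tl (u + NA) <= 21 / 20 * eta.
Proof.
  intros Hu Htlu Hwin HNA. pose proof eta_ge_160. pose proof eta_ge_1.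
  assert (Hg2 : 0 < gamma ^ 2) by (apply pow_lt; lra).
  split.
  - pose proof (hat_ge_linear u NA ltac:(intros k Hk; apply Hwin, Hk)).
    pose proof (lambda_le_hat u Hu).
    assert (48 <= gamma ^ 2 * INR NA).
    { replace 48 with (gamma ^ 2 * (48 / gamma ^ 2)) by (field; lra). apply Rmult_le_compat_l; lra. }
    assert (3 <= gamma * (INR NA * (gamma / 16))).
    { replace (gamma * (INR NA * (gamma / 16))) with (gamma ^ 2 * INR NA / 16) by (simpl; field). lra. }
    nra.
  - pose proof (tl_le_linear u NA Hu ltac:(intros k Hk; apply Hwin, Hk)).
    assert (7 / gamma ^ 2 <= eta / 20).
    { replace (7 / gamma ^ 2) with (7 / 160 * (160 / gamma ^ 2)) by (field; lra). lra. }
    assert (Hinv : 1 <= 1 / gamma ^ 2) by (rewrite <- Rle_div_r; simpl; nra).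
    assert (INR NA / 7 <= 7 / gamma ^ 2).
    { replace (7 / gamma ^ 2) with ((48 / gamma ^ 2 + 1 / gamma ^ 2) / 7) by (field; lra). lra. }
    lra.
Qed.

Lemma no_long_positive_excursion u N : (1 <= u)%nat -> tl u <= eta ->
  (forall s, (u <= s <= N)%nat -> 0 < tl s /\ risk s > theta) ->
  INR u + 4 * INR n / gamma + 66 / gamma ^ 2 + 3 <= INR N -> False.
Proof.
  intros Hu Htlu Hwin HN.
  assert (Hg2 : 0 < gamma ^ 2) by (apply pow_lt; lra).
  destruct (exists_nat_between (48 / gamma ^ 2)) as [NA HNA]; [apply Rlt_le, Rdiv_lt_0_compat; lra |].
  destruct (exists_nat_between (4 * INR n / gamma)) as [M HM];
    [apply Rlt_le, Rdiv_lt_0_compat; [pose proof INR_n_ge_1 |]; lra |].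
  destruct (exists_nat_between (18 / gamma ^ 2)) as [J HJ]; [apply Rlt_le, Rdiv_lt_0_compat; lra |].
  assert (Hlen : (u + NA + M + J <= N)%nat) by (apply INR_le; rewrite !plus_INR; lra).
  destruct (burn_in u NA Hu Htlu ltac:(intros k Hk; apply Hwin; lia) HNA) as [HhA HtlA].
  set (sA := (u + NA)%nat) in *.
  destruct (classic (exists j, (j < M)%nat /\ forall i, (i < n)%nat -> 0 <= z (sA + j) i))
    as [[j [Hj Hz]] | Hneg].
  - apply (no_long_nonneg_margin_phase (sA + j) J Hz).
    + pose proof (hat_monotone sA (sA + j) ltac:(lia)). nra.
    + intros k Hk. apply Hwin. unfold sA. lia.
    + lra.
  - apply (no_long_neg_margin_phase sA M HhA HtlA).
    + intros k Hk. apply Hwin. unfold sA. lia.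
    + intros k Hk. apply NNPP. intros Hnone. apply Hneg. exists k. split; [exact Hk |].
      intros i Hi. apply Rnot_lt_le. intros Hzi. apply Hnone. exists i. split; assumption.
    + lra.
Qed.

End Dynamics.

(** * Sign changes of [tl] *)

Lemma sign_persists (W : nat -> R) u N : 0 < W u ->
  (forall s, (u <= s < N)%nat -> 0 < W s * W (S s)) ->
  forall s, (u <= s <= N)%nat -> 0 < W s.
Proof.
  intros Hu Hprod s [Hus HsN]. induction Hus as [| s Hus IH]; [exact Hu |].
  pose proof (IH ltac:(lia)). pose proof (Hprod s ltac:(lia)). nra.
Qed.

Lemma Rabs_le_of_opposite_signs a b : a * b <= 0 -> Rabs b <= Rabs (b - a).
Proof.
  intros Hab. unfold Rabs.
  destruct (Rcase_abs b), (Rcase_abs (b - a)); nra.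
Qed.

Lemma no_long_excursion n x gamma eta ws v u N :
  (0 < n)%nat ->
  (forall i, (i < n)%nat -> dot (x i) (x i) <= 1) ->
  (forall i, (i < n)%nat -> gamma <= dot (x i) ws) ->
  vnorm ws = 1 -> vnorm v = 1 -> dot v ws = 0 ->
  0 < gamma -> gamma <= 1 -> INR n <= eta ->
  32 / gamma ^ 2 * ln (256 / gamma ^ 2) <= eta ->
  (1 <= u)%nat -> Rabs (dot (gd n x eta u) v) <= eta ->
  (forall s, (u <= s < N)%nat -> 0 < dot (gd n x eta s) v * dot (gd n x eta (S s)) v) ->
  (forall s, (u <= s <= N)%nat -> F n x (gd n x eta s) > 1 / (8 * eta)) ->
  INR u + 4 * INR n / gamma + 66 / gamma ^ 2 + 3 <= INR N -> False.
Proof.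
  intros Hn Hx Hm Hws Hv Hvws Hg Hg1 HnE HlogE Hu Hjump Hsame Hrisk HN.
  set (W := fun s => dot (gd n x eta s) v) in *.
  assert (HuN : (u < N)%nat).
  { apply INR_lt. pose proof (lt_0_INR n Hn).
    assert (0 <= 4 * INR n / gamma) by (apply Rlt_le, Rdiv_lt_0_compat; lra).
    assert (0 < 66 / gamma ^ 2) by (apply Rdiv_lt_0_compat; [| apply pow_lt]; lra). lra. }
  apply Rabs_le_between in Hjump.
  destruct (Rlt_or_le 0 (W u)) as [Hpos | Hneg].
  - refine (no_long_positive_excursion n x gamma eta ws v Hn Hx Hm Hws Hv Hvws Hg Hg1 HnE HlogE
              u N Hu _ _ HN); [unfold W in Hjump; lra |].
    intros s Hs. split; [apply (sign_persists W u N Hpos Hsame s Hs) | apply Hrisk, Hs].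
  - assert (HWu : 0 < - W u).
    { pose proof (Hsame u ltac:(lia)) as Hprod. destruct (Req_dec (W u) 0) as [Hz | Hnz]; [| lra].
      unfold W in Hz. rewrite Hz, Rmult_0_l in Hprod. lra. }
    refine (no_long_positive_excursion n x gamma eta ws (vscale (-1) v) Hn Hx Hm Hws _ _ Hg Hg1
              HnE HlogE u N Hu _ _ HN).
    + rewrite vnorm_vscale_opp. exact Hv.
    + rewrite dot_vscale_l, Hvws. ring.
    + rewrite dot_vscale_r. unfold W in Hjump. lra.
    + intros s Hs. rewrite dot_vscale_r. split; [| apply Hrisk, Hs].
      pose proof (sign_persists (fun s => - W s) u N HWu
                    ltac:(intros k Hk; pose proof (Hsame k Hk); unfold W; nra) s Hs).
      unfold W in *. lra.
Qed.

Lemma late_sign_change n x gamma eta ws v t N :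
  (0 < n)%nat ->
  (forall i, (i < n)%nat -> dot (x i) (x i) <= 1) ->
  (forall i, (i < n)%nat -> gamma <= dot (x i) ws) ->
  vnorm ws = 1 -> vnorm v = 1 -> dot v ws = 0 ->
  0 < gamma -> gamma <= 1 -> INR n <= eta ->
  32 / gamma ^ 2 * ln (256 / gamma ^ 2) <= eta ->
  (forall s, (s <= N)%nat -> F n x (gd n x eta s) > 1 / (8 * eta)) ->
  INR t + 4 * INR n / gamma + 66 / gamma ^ 2 + 4 <= INR N ->
  exists s, (t <= s < N)%nat /\ (1 <= s)%nat /\
    dot (gd n x eta (S s)) v * dot (gd n x eta s) v < 0.
Proof.
  intros Hn Hx Hm Hws Hv Hvws Hg Hg1 HnE HlogE Hrisk HN.
  set (W := fun s => dot (gd n x eta s) v).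
  assert (HWne : forall s, (1 <= s <= N)%nat -> W s <> 0).
  { intros s Hs HWs.
    assert (F n x (gd n x eta s) <= 1 / (8 * eta))
      by (apply (risk_le_theta_of_tl_0 n x gamma eta ws v); [assumption .. | apply Hs | exact HWs]).
    pose proof (Hrisk s (proj2 Hs)). lra. }
  assert (HNpos : (0 < N)%nat).
  { apply INR_lt. rewrite INR_0. pose proof (pos_INR t). pose proof (lt_0_INR n Hn).
    assert (0 <= 4 * INR n / gamma) by (apply Rlt_le, Rdiv_lt_0_compat; lra).
    assert (0 < 66 / gamma ^ 2) by (apply Rdiv_lt_0_compat; [| apply pow_lt]; lra). lra. }
  destruct (last_index_below (fun s => W s * W (S s) <= 0) N) as [s1 [Hs1N [Hs1 Hlast]]];
    [unfold W; simpl; rewrite dot_0_l; lra | exact HNpos |].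
  destruct (classic ((t <= s1)%nat /\ (1 <= s1)%nat)) as [[Hts1 H1s1] | Hearly].
  - exists s1. split; [lia | split; [exact H1s1 |]].
    pose proof (HWne s1 ltac:(lia)). pose proof (HWne (S s1) ltac:(lia)).
    assert (W (S s1) * W s1 <> 0) by (apply Rmult_integral_contrapositive; split; assumption).
    unfold W in *. nra.
  - exfalso. apply (no_long_excursion n x gamma eta ws v (S s1) N); try assumption.
    + lia.
    + eapply Rle_trans; [apply Rabs_le_of_opposite_signs, Hs1 |].
      apply (tl_step_abs_le n x gamma eta ws v); assumption.
    + intros s Hs. apply Rnot_le_lt, Hlast. lia.
    + intros s Hs. apply Hrisk, Hs.
    + assert (INR (S s1) <= INR t + 1) by (rewrite <- S_INR; apply le_INR; lia). lra.
Qed.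

Lemma tau_of_hit n x eta t N : lt_tau n x eta t ->
  (exists s, (s <= N)%nat /\ F n x (gd n x eta s) <= 1 / (8 * eta)) ->
  exists s, (t < s <= N)%nat /\ is_tau n x eta s.
Proof.
  intros Hlt [s0 [Hs0 Hhit]].
  destruct (least_index (fun s => F n x (gd n x eta s) <= 1 / (8 * eta))) as [s [Hs Hmin]];
    [exists s0; exact Hhit |].
  exists s. split; [split |].
  - destruct (Nat.lt_ge_cases t s) as [| Hst]; [assumption |].
    specialize (Hlt s Hst). lra.
  - destruct (Nat.le_gt_cases s s0) as [| Hs0s]; [lia |]. now exfalso; apply (Hmin s0).
  - split; [exact Hs |]. intros k Hk. apply Rnot_le_gt, Hmin, Hk.
Qed.

Lemma max_margin_le_1 n x gamma wstar : max_margin n x gamma wstar ->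
  (forall i, (i < n)%nat -> vnorm (x i) <= 1) -> gamma <= 1.
Proof.
  intros (Hws & _ & [i [Hi Heq]] & _) Hx.
  pose proof (cauchy_schwarz wstar (x i)) as Hcs.
  rewrite (vnorm_1_dot _ Hws), Heq in Hcs.
  pose proof (vnorm_le_1_dot _ (Hx i Hi)). pose proof (dot_self_ge_0 (x i)). nra.
Qed.

Lemma max_margin_pos n x gamma wstar : (0 < n)%nat -> max_margin n x gamma wstar ->
  (exists w, forall i, (i < n)%nat -> dot w (x i) > 0) -> 0 < gamma.
Proof.
  intros Hn (_ & _ & _ & Hmax) [w Hw].
  assert (Hww : 0 < dot w w).
  { destruct (Rle_dec (dot w w) 0) as [Hle | Hgt]; [| lra].
    pose proof (Hw 0%nat Hn). destruct w as [w1 w2]. unfold dot in *. simpl in *.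
    assert (w1 = 0) by nra. assert (w2 = 0) by nra. subst. lra. }
  set (r := sqrt (dot w w)).
  assert (Hr : 0 < r) by (apply sqrt_lt_R0; exact Hww).
  assert (Hrr : r * r = dot w w) by (apply sqrt_sqrt; lra).
  destruct (Hmax (vscale (/ r) w)) as [i [Hi Hle]].
  { unfold vnorm. rewrite dot_vscale_l, dot_vscale_r, <- Hrr.
    replace (/ r * (/ r * (r * r))) with 1 by (field; lra). apply sqrt_1. }
  rewrite dot_vscale_l in Hle. pose proof (Hw i Hi).
  assert (0 < / r * dot w (x i)) by (apply Rmult_lt_0_compat; [apply Rinv_0_lt_compat |]; lra).
  lra.
Qed.

Lemma eta0_le n gamma eta : eta >= eta0 n gamma ->
  INR n <= eta /\ 32 / gamma ^ 2 * ln (256 / gamma ^ 2) <= eta.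
Proof.
  unfold eta0. intros Heta.
  pose proof (Rmax_l (INR n) (32 / gamma ^ 2 * ln (256 / gamma ^ 2))).
  pose proof (Rmax_r (INR n) (32 / gamma ^ 2 * ln (256 / gamma ^ 2))).
  split; lra.
Qed.

Theorem lemma7 (n : nat) (x : nat -> vec2) (gamma eta : R) (wstar vstar : vec2) (t : nat) :
  (0 < n)%nat ->
  (forall i, (i < n)%nat -> vnorm (x i) <= 1) ->
  (exists w : vec2, forall i, (i < n)%nat -> dot w (x i) > 0) ->
  max_margin n x gamma wstar ->
  vnorm vstar = 1 ->
  dot vstar wstar = 0 ->
  0 < eta ->
  eta >= eta0 n gamma ->
  lt_tau n x eta t ->
  exists s : nat,
    (t <= s)%nat /\
    INR s <= INR t + 1 + 4 * INR n / gamma + 96 / gamma ^ 2 /\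
    (is_tau n x eta s \/ oscillation n x eta gamma wstar vstar s).
Proof.
  intros Hn Hx Hsep Hmm Hv Hvw _ Heta0 Hlt.
  pose proof (max_margin_pos n x gamma wstar Hn Hmm Hsep) as Hg.
  pose proof (max_margin_le_1 n x gamma wstar Hmm Hx) as Hg1.
  destruct Hmm as (Hws & Hge & _). destruct (eta0_le n gamma eta Heta0) as [HnE HlogE].
  assert (Hx1 : forall i, (i < n)%nat -> dot (x i) (x i) <= 1)
    by (intros i Hi; apply vnorm_le_1_dot, Hx, Hi).
  assert (Hm : forall i, (i < n)%nat -> gamma <= dot (x i) wstar)
    by (intros i Hi; rewrite dot_comm; apply Hge, Hi).
  assert (Hslack : 30 <= 30 / gamma ^ 2) by (rewrite <- Rle_div_r; [simpl; nra | apply pow_lt; lra]).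
  assert (0 <= 4 * INR n / gamma)
    by (apply Rlt_le, Rdiv_lt_0_compat; [pose proof (lt_0_INR n Hn) |]; lra).
  destruct (exists_nat_between (4 * INR n / gamma + 96 / gamma ^ 2)) as [L HL]; [lra |].
  assert (HtL : INR (t + L) <= INR t + 1 + 4 * INR n / gamma + 96 / gamma ^ 2)
    by (rewrite plus_INR; lra).
  destruct (classic (exists s, (s <= t + L)%nat /\ F n x (gd n x eta s) <= 1 / (8 * eta)))
    as [Hhit | Hnohit].
  - destruct (tau_of_hit n x eta t (t + L) Hlt Hhit) as [s [Hs Htau]].
    exists s. split; [lia | split; [| left; exact Htau]].
    pose proof (le_INR s (t + L) ltac:(lia)). lra.
  - assert (Hrisk : forall s, (s <= t + L)%nat -> F n x (gd n x eta s) > 1 / (8 * eta))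
      by (intros s Hs; apply Rnot_le_gt; intros Hle; apply Hnohit; exists s; split; assumption).
    destruct (late_sign_change n x gamma eta wstar vstar t (t + L) Hn Hx1 Hm Hws Hv Hvw Hg Hg1
                HnE HlogE Hrisk ltac:(rewrite plus_INR; lra)) as [s [Hs [H1s Hsign]]].
    exists s. split; [lia | split; [pose proof (le_INR s (t + L) ltac:(lia)); lra | right]].
    split; [| split; [apply Hrisk; lia | split; [apply Hrisk; lia | exact Hsign]]].
    apply Rle_ge, (lambda_le_hat n x gamma eta wstar); assumption.
Qed.
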